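(* Assume $q\neq 0$, $d\neq 0$ and $A\neq 0$. For every integer $n$ let $x_n=h_{n+1}-qh_{n-1}$. Then for all integers $n$ and $k$, $$\left(\frac{x_n+h_n d}{2Ad}\right)^k=\frac{x_{kn}+h_{kn}d}{2Ad}.$$
   Context: Let $p,q,a,b$ be complex numbers. Fix $d=\sqrt{p^2-4q}$ and put $\alpha=\frac{p+d}{2}$, $\beta=\frac{p-d}{2}$, $A=b-a\beta$. The Horadam-Lucas sequence $(h_n)$ is defined by $h_0=2b-ap$, $h_1=bp-2aq$, and $h_n=ph_{n-1}-qh_{n-2}$. Since $q\neq 0$, it is extended to all integer indices by $h_{n-2}=(ph_{n-1}-h_n)/q$. *)

From mathcomp Require Import all_boot all_algebra.
From mathcomp Require Import complex reals.
Set Implicit Arguments. Unset Strict Implicit. Unset Printing Implicit Defensive.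
Import GRing.Theory Num.Theory.
Local Open Scope ring_scope.

(* When q <> 0 this recurrence on all of Z is equivalent to
   the forward recurrence together with the backward extension
   h (n-2) = (p h (n-1) - h n) / q, and determines h uniquely. *)
Definition horadam_lucas (C : ringType) (p q a b : C) (h : int -> C) : Prop :=
  [/\ h 0 = 2 * b - a * p,
      h 1 = b * p - 2 * a * q
    & forall n : int, h n = p * h (n - 1) - q * h (n - 2)].

From mathcomp Require Import all_boot all_algebra.
From mathcomp Require Import complex reals.
From mathcomp Require Import ring.
Set Implicit Arguments. Unset Strict Implicit. Unset Printing Implicit Defensive.
Import GRing.Theory Num.Theory.
Local Open Scope ring_scope.

(* With alpha, beta the roots of X^2 - p X + q, the sequence h (n + 1) - beta h n
   is geometric of ratio alpha with initial term A d, and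
   x n + h n d = 2 (h (n + 1) - beta h n).  Hence (x n + h n d) / (2 A d) = alpha ^ n,
   and the identity is (alpha ^ n) ^ k = alpha ^ (k n). *)

Lemma geometric_int (F : fieldType) (c : F) (u : int -> F) :
  c != 0 -> (forall n, u (n + 1) = c * u n) -> forall n, u n = c ^ n * u 0.
Proof.
move=> c_neq0 u_succ; elim/int_ind => [|m IHm|m IHm]; first by rewrite expr0z mul1r.
  by rewrite exprSz -mulrA -IHm -u_succ intS addrC.
have u_pred : u (- m%:Z) = c * u (- m.+1%:Z).
  by rewrite -u_succ intS opprD addrAC addNr add0r.
apply: (mulfI c_neq0); rewrite -u_pred IHm -!exprnN exprS invfM.
by rewrite !mulrA mulfV // mul1r.
Qed.

Lemma horadam_lucas_succ (C : nzRingType) (p q a b : C) (h : int -> C) :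
  horadam_lucas p q a b h -> forall n, h (n + 1) = p * h n - q * h (n - 1).
Proof. by case=> _ _ h_rec n; rewrite h_rec addrK -addrA. Qed.

Section HoradamLucasBinet.

Variables (F : fieldType) (p q d a b : F) (h : int -> F).
Hypothesis two_neq0 : (2 : F) != 0.
Hypothesis d_sqr : d ^+ 2 = p ^+ 2 - 4 * q.
Hypothesis lucas : horadam_lucas p q a b h.

Let alpha := (p + d) / 2.
Let beta := (p - d) / 2.

Lemma mul_roots : alpha * beta = q.
Proof.
have four_neq0 : (4 : F) != 0.
  by have := mulf_neq0 two_neq0 two_neq0; rewrite -natrM.
apply: (mulfI four_neq0); rewrite /alpha /beta.
have -> : 4 * q = p ^+ 2 - d ^+ 2 by rewrite d_sqr; ring.
by field.
Qed.

Lemma add_roots : alpha + beta = p.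
Proof. by rewrite /alpha /beta; field. Qed.

Let h_succ := horadam_lucas_succ lucas.

Lemma horadam_lucas_beta_diffS n :
  h (n + 1 + 1) - beta * h (n + 1) = alpha * (h (n + 1) - beta * h n).
Proof. by rewrite h_succ addrK -{1}add_roots -mul_roots; ring. Qed.

Lemma horadam_lucas_beta_diff0 : h 1 - beta * h 0 = (b - a * beta) * d.
Proof.
by case: lucas => -> -> _; rewrite -mul_roots /alpha /beta; field.
Qed.

Lemma horadam_lucas_companion n :
  h (n + 1) - q * h (n - 1) + h n * d = 2 * (h (n + 1) - beta * h n).
Proof.
have -> : q * h (n - 1) = p * h n - h (n + 1) by rewrite h_succ; ring.
by rewrite /beta; field.
Qed.

Hypothesis q_neq0 : q != 0.

Lemma horadam_lucas_binet n :
  h (n + 1) - q * h (n - 1) + h n * d = alpha ^ n * (2 * (b - a * beta) * d).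
Proof.
have alpha_neq0 : alpha != 0.
  by apply: contraNneq q_neq0; rewrite -mul_roots => ->; rewrite mul0r.
rewrite horadam_lucas_companion (geometric_int alpha_neq0 horadam_lucas_beta_diffS).
by rewrite add0r horadam_lucas_beta_diff0 mulrCA !mulrA.
Qed.

End HoradamLucasBinet.

Theorem mainTheorem2 (R : realType) (p q a b d : R[i]) (h : int -> R[i]) :
  d ^+ 2 = p ^+ 2 - 4 * q ->
  horadam_lucas p q a b h ->
  q != 0 -> d != 0 -> b - a * ((p - d) / 2) != 0 ->
  let A := b - a * ((p - d) / 2) in
  let x := fun n : int => h (n + 1) - q * h (n - 1) in
  forall n k : int,
    ((x n + h n * d) / (2 * A * d)) ^ k = (x (k * n) + h (k * n) * d) / (2 * A * d).
Proof.
move=> d_sqr lucas q_neq0 d_neq0 A_neq0 A x n k.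
have two_neq0 : (2 : R[i]) != 0 by rewrite pnatr_eq0.
have scale_neq0 : 2 * A * d != 0 by rewrite !mulf_neq0.
rewrite /x !(horadam_lucas_binet two_neq0 d_sqr lucas q_neq0) !mulfK //.
by rewrite exprz_exp (mulrC n).
Qed.
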